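(* Fix $\alpha\in(0,1]$, $\beta\in[1,\infty)$ and integers $m,n\ge2$. Suppose there is an $\alpha$-envy-free mechanism for the job scheduling problem over the normalized instances $\mathcal{N}$ with $m+1$ machines and $n+1$ jobs whose allocation function gives a $\beta$-approximation to the optimal makespan. Then there is an $\alpha$-envy-free mechanism for the job scheduling problem over the general instances $\mathcal{C}$ with $m$ machines and $n$ jobs whose allocation function gives a $\beta$-approximation to the optimal makespan.
   Context: For $m'$ machines and $n'$ jobs: an instance is $c\in\mathbb{R}_{\ge0}^{m'\times n'}$, $c_i(S)=\sum_{j\in S}c_{i,j}$. General instances $\mathcal{C}=\mathbb{R}_{\ge0}^{m'\times n'}$; normalized instances $\mathcal{N}=\{c\in\mathcal{C}:\exists C,\ c_i([n'])=C\ \forall i\}$. An allocation is a tuple of pairwise disjoint subsets of $[n']$ with union $[n']$. A mechanism $(A,p)$ over $\mathcal{I}$ assigns to each $c$ an allocation $A(c)$ and payments $p(c)\in\mathbb{R}^{m'}$ (written $A_i,p_i$). It is $\alpha$-envy-free ($\alpha\in(0,1]$) if for every $c\in\mathcal{I}$ and all machines $i,j$: $\alpha\, c_i(A_i)-p_i\le c_i(A_j)-p_j$. $\mathrm{OPT}(c)=\min_X\max_i c_i(X_i)$ over allocations $X$; $A$ gives a $\beta$-approximation if $\max_i c_i(A(c)_i)\le\beta\,\mathrm{OPT}(c)$ for all $c\in\mathcal{I}$. *)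

From mathcomp Require Import all_boot all_order all_algebra.
From mathcomp Require Import reals.
Set Implicit Arguments. Unset Strict Implicit. Unset Printing Implicit Defensive.
Import Order.TTheory GRing.Theory Num.Theory.
Local Open Scope ring_scope.

Section Sched.
Variables (R : realType) (m n : nat).

Definition instance := 'M[R]_(m, n).

Definition cost (c : instance) (i : 'I_m) (S : {set 'I_n}) : R :=
  \sum_(j in S) c i j.

Definition general (c : instance) : Prop := forall i j, 0 <= c i j.

Definition normalized (c : instance) : Prop :=
  general c /\ exists C : R, forall i, cost c i setT = C.

Definition allocation := {ffun 'I_m -> {set 'I_n}}.

Definition is_allocation (X : allocation) : bool :=
  [forall i : 'I_m, forall k : 'I_m, (i != k) ==> [disjoint X i & X k]] &&
  (\bigcup_(i < m) X i == setT).

(* max_i c_i(X_i) (costs are nonnegative on the instances considered) *)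
Definition makespan (c : instance) (X : allocation) : R :=
  \big[Num.max/0]_(i < m) cost c i (X i).

(* OPT(c) = min over allocations X of makespan; the default value (total cost
   of all entries) is never below the makespan of any allocation for
   nonnegative c, and allocations exist when m >= 1, so this is the minimum. *)
Definition OPT (c : instance) : R :=
  \big[Num.min/(\sum_(i < m) \sum_(j < n) c i j)]_(X : allocation | is_allocation X)
     makespan c X.

Definition alloc_fun := instance -> allocation.
Definition pay_fun := instance -> 'I_m -> R.

Definition is_mechanism (I : instance -> Prop) (A : alloc_fun) : Prop :=
  forall c, I c -> is_allocation (A c).

Definition envy_free (alpha : R) (I : instance -> Prop) (A : alloc_fun) (p : pay_fun) : Prop :=
  forall c, I c -> forall i k : 'I_m,
    alpha * cost c i (A c i) - p c i <= cost c i (A c k) - p c k.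

Definition beta_approx (beta : R) (I : instance -> Prop) (A : alloc_fun) : Prop :=
  forall c, I c -> makespan c (A c) <= beta * OPT c.

End Sched.

(* Embed a general instance c with m machines and n jobs into a normalized
   instance with one extra machine and one extra job.  With D larger than
   beta times the total cost of c, the extra machine costs D on every original
   job and 0 on the extra job, while original machine i pays n D - c_i([n])
   for the extra job, so that every machine has total cost n D.  Any
   allocation of c extends (extra job to extra machine) without increasing the
   makespan, so OPT does not grow; hence a beta-approximate allocation of the
   padded instance has makespan < D, which forces the extra job onto the extra
   machine and no original job onto it.  Restricting allocation and payments to
   the original machines and jobs then preserves envy-freeness and the
   approximation ratio, because the costs of the original machines on their
   original bundles are unchanged. *)
From mathcomp Require Import all_boot all_order all_algebra.
From mathcomp Require Import reals.
From mathcomp Require Import lra.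
Set Implicit Arguments. Unset Strict Implicit. Unset Printing Implicit Defensive.
Import Order.TTheory GRing.Theory Num.Theory.
Local Open Scope ring_scope.

Section Schedules.
Context {R : realType} {m n : nat}.
Implicit Types (c : instance R m n) (X : allocation m n).

Lemma is_allocationP X : is_allocation X <->
  (forall i k j, i != k -> j \in X i -> j \in X k -> False) /\
  (forall j, exists i, j \in X i).
Proof.
split.
- move=> /andP[/forallP disjX /eqP coverX]; split.
  + move=> i k j ik jXi jXk.
    have /forallP/(_ k)/implyP/(_ ik) dik := disjX i.
    by rewrite (disjointFr dik jXi) in jXk.
  + move=> j; have : j \in \bigcup_(i < m) X i by rewrite coverX inE.
    by case/bigcupP => i _ jXi; exists i.
- case=> disjX coverX; apply/andP; split.
  + apply/forallP => i; apply/forallP => k; apply/implyP => ik.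
    rewrite -setI_eq0; apply/eqP/setP => j; rewrite !inE.
    by apply/negbTE/negP => /andP[jXi jXk]; exact: disjX ik jXi jXk.
  + apply/eqP/setP => j; rewrite inE; have [i jXi] := coverX j.
    by apply/bigcupP; exists i.
Qed.

Lemma exists_allocation : (0 < m)%N -> exists X, is_allocation X.
Proof.
move=> m_gt0; pose i0 : 'I_m := Ordinal m_gt0.
exists [ffun i => if i == i0 then setT else set0]; apply/is_allocationP; split.
- move=> i k j; rewrite !ffunE.
  by case: (i =P i0) => [-> | _]; case: (k =P i0) => [-> | _];
    rewrite ?inE ?eqxx.
- by move=> j; exists i0; rewrite ffunE eqxx inE.
Qed.

Definition total_cost c : R := \sum_(i < m) \sum_(j < n) c i j.

Lemma row_cost_le_total c i : general c -> \sum_(j < n) c i j <= total_cost c.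
Proof.
move=> c_ge0; rewrite /total_cost (bigD1 i) //= lerDl.
by apply: sumr_ge0 => k _; apply: sumr_ge0 => j _.
Qed.

Lemma total_cost_ge0 c : general c -> 0 <= total_cost c.
Proof. by move=> c_ge0; apply: sumr_ge0 => i _; apply: sumr_ge0 => j _. Qed.

Lemma cost_le_row_cost c i (S : {set 'I_n}) :
  general c -> cost c i S <= \sum_(j < n) c i j.
Proof.
move=> c_ge0; rewrite /cost big_mkcond /=; apply: ler_sum => j _.
by case: ifP.
Qed.

Lemma entry_le_cost c i (S : {set 'I_n}) j :
  general c -> j \in S -> c i j <= cost c i S.
Proof.
by move=> c_ge0 jS; rewrite /cost (bigD1 j) //= lerDl; apply: sumr_ge0.
Qed.

Lemma cost_le_makespan c X i : cost c i (X i) <= makespan c X.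
Proof. exact: (le_bigmax _ (fun i => cost c i (X i))). Qed.

Lemma makespan_le c X M : 0 <= M -> (forall i, cost c i (X i) <= M) ->
  makespan c X <= M.
Proof. by move=> M_ge0 cost_le; apply: bigmax_le => // i _; exact: cost_le. Qed.

Lemma makespan_ge0 c X : 0 <= makespan c X.
Proof. by rewrite /makespan bigmax_idl le_max lexx. Qed.

Lemma entry_le_makespan c X i j :
  general c -> j \in X i -> c i j <= makespan c X.
Proof.
by move=> c_ge0 jXi; apply: le_trans (entry_le_cost i c_ge0 jXi) _;
  exact: cost_le_makespan.
Qed.

Lemma makespan_le_total c X : general c -> makespan c X <= total_cost c.
Proof.
move=> c_ge0; apply: makespan_le; first exact: total_cost_ge0.
move=> i; apply: le_trans (cost_le_row_cost i (X i) c_ge0) _.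
exact: row_cost_le_total.
Qed.

Lemma OPT_le_makespan c X : is_allocation X -> OPT c <= makespan c X.
Proof. by move=> X_alloc; apply: (bigmin_le_cond _ (makespan c) X_alloc). Qed.

Lemma OPT_le_total c : OPT c <= total_cost c.
Proof. exact: bigmin_le_id. Qed.

Lemma le_OPT c x : general c -> (0 < m)%N ->
  (forall X, is_allocation X -> x <= makespan c X) -> x <= OPT c.
Proof.
move=> c_ge0 m_gt0 x_le; apply: le_bigmin => //.
have [X0 X0_alloc] := exists_allocation m_gt0.
apply: le_trans (x_le X0 X0_alloc) _; exact: makespan_le_total.
Qed.

End Schedules.

Section Padding.
Variables (R : realType) (m n : nat) (beta : R).
Hypotheses (beta_ge1 : 1 <= beta) (n_ge2 : (2 <= n)%N).
Implicit Types (c : instance R m n) (X : allocation m n)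
  (Y : allocation m.+1 n.+1).

Definition extra_cost c : R := beta * total_cost c + total_cost c + 1.

Definition pad c : instance R m.+1 n.+1 :=
  \matrix_(i, j) match unlift ord_max i, unlift ord_max j with
   | Some i', Some j' => c i' j'
   | Some i', None => n%:R * extra_cost c - \sum_(k < n) c i' k
   | None, Some _ => extra_cost c
   | None, None => 0 end.

Lemma pad_lift_lift c i j : pad c (lift ord_max i) (lift ord_max j) = c i j.
Proof. by rewrite mxE !liftK. Qed.

Lemma pad_lift_max c i :
  pad c (lift ord_max i) ord_max = n%:R * extra_cost c - \sum_(k < n) c i k.
Proof. by rewrite mxE liftK unlift_none. Qed.

Lemma pad_max_lift c j : pad c ord_max (lift ord_max j) = extra_cost c.
Proof. by rewrite mxE liftK unlift_none. Qed.

Lemma pad_max_max c : pad c ord_max ord_max = 0.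
Proof. by rewrite mxE !unlift_none. Qed.

Lemma cost_pad c i (S : {set 'I_n.+1}) : ord_max \notin S ->
  cost (pad c) (lift ord_max i) S = cost c i [set j | lift ord_max j \in S].
Proof.
move=> maxNS; rewrite /cost big_mkcond (bigD1_ord ord_max) //= (negbTE maxNS).
rewrite add0r [RHS]big_mkcond; apply: eq_bigr => j _.
by rewrite inE pad_lift_lift.
Qed.

Lemma extra_cost_gt_total c : general c -> total_cost c < extra_cost c.
Proof.
move=> c_ge0; have S_ge0 := total_cost_ge0 c_ge0.
have bS_ge0 : 0 <= beta * total_cost c.
  by apply: mulr_ge0 => //; exact: le_trans ler01 beta_ge1.
rewrite /extra_cost; lra.
Qed.

Lemma extra_cost_gt0 c : general c -> 0 < extra_cost c.
Proof.
by move=> c_ge0; exact: le_lt_trans (total_cost_ge0 c_ge0) (extra_cost_gt_total c_ge0).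
Qed.

Lemma extra_cost_le_pad_lift_max c i :
  general c -> extra_cost c <= pad c (lift ord_max i) ord_max.
Proof.
move=> c_ge0; rewrite pad_lift_max.
have row_lt : \sum_(k < n) c i k < extra_cost c.
  exact: le_lt_trans (row_cost_le_total i c_ge0) (extra_cost_gt_total c_ge0).
have two_le : 2 * extra_cost c <= n%:R * extra_cost c.
  by apply: ler_wpM2r; [exact: ltW (extra_cost_gt0 c_ge0) | rewrite ler_nat].
lra.
Qed.

Lemma pad_general c : general c -> general (pad c).
Proof.
move=> c_ge0 i j; have D_gt0 := extra_cost_gt0 c_ge0.
case: (unliftP ord_max i) => [i'|] ->; case: (unliftP ord_max j) => [j'|] ->.
- by rewrite pad_lift_lift.
- exact: le_trans (ltW D_gt0) (extra_cost_le_pad_lift_max i' c_ge0).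
- by rewrite pad_max_lift ltW.
- by rewrite pad_max_max.
Qed.

Lemma pad_normalized c : general c -> normalized (pad c).
Proof.
move=> c_ge0; split; first exact: pad_general.
exists (n%:R * extra_cost c) => i.
rewrite /cost (eq_bigl predT) => [|j]; last by rewrite in_setT.
rewrite (bigD1_ord ord_max) //=.
case: (unliftP ord_max i) => [i'|] ->.
- under eq_bigr do rewrite pad_lift_lift.
  by rewrite pad_lift_max subrK.
- under eq_bigr do rewrite pad_max_lift.
  by rewrite pad_max_max add0r sumr_const card_ord mulr_natl.
Qed.

Definition extend X : allocation m.+1 n.+1 :=
  [ffun i => if unlift ord_max i is Some i' then lift ord_max @: X i'
             else [set ord_max]].

Lemma extend_allocation X : is_allocation X -> is_allocation (extend X).
Proof.
move/is_allocationP => [disjX coverX]; apply/is_allocationP; split.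
- move=> i k j; rewrite !ffunE.
  case: (unliftP ord_max i) => [i'|] ->; case: (unliftP ord_max k) => [k'|] ->;
    rewrite ?liftK ?unlift_none ?eqxx //.
  + move=> ik /imsetP[a aXi ->]; rewrite mem_imset; last exact: lift_inj.
    by apply: disjX aXi; apply: contraNneq ik => ->.
  + by move=> _ /imsetP[a _ ->]; rewrite inE eq_sym (negbTE (neq_lift _ _)).
  + by move=> _; rewrite inE => /eqP -> /imsetP[a _ /eqP];
      rewrite (negbTE (neq_lift _ _)).
- move=> j; case: (unliftP ord_max j) => [j'|] ->.
  + have [i jXi] := coverX j'; exists (lift ord_max i).
    by rewrite ffunE liftK mem_imset //; exact: lift_inj.
  + by exists ord_max; rewrite ffunE unlift_none inE.
Qed.

Lemma makespan_pad_extend c X : makespan (pad c) (extend X) <= makespan c X.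
Proof.
apply: makespan_le; first exact: makespan_ge0.
move=> i; rewrite ffunE; case: (unliftP ord_max i) => [i'|] ->;
  rewrite ?liftK ?unlift_none /cost.
- rewrite big_imset /=; last by move=> a b _ _; exact: lift_inj.
  under eq_bigr do rewrite pad_lift_lift.
  exact: cost_le_makespan.
- by rewrite big_set1 pad_max_max makespan_ge0.
Qed.

Lemma OPT_pad c : general c -> (0 < m)%N -> OPT (pad c) <= OPT c.
Proof.
move=> c_ge0 m_gt0; apply: le_OPT => // X X_alloc.
apply: le_trans (makespan_pad_extend c X).
exact: OPT_le_makespan _ (extend_allocation X_alloc).
Qed.

Lemma approx_makespan_lt_extra_cost c Y : general c -> (0 < m)%N ->
  makespan (pad c) Y <= beta * OPT (pad c) -> makespan (pad c) Y < extra_cost c.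
Proof.
move=> c_ge0 m_gt0 Y_approx.
have beta_ge0 : 0 <= beta := le_trans ler01 beta_ge1.
have OPT_le : OPT (pad c) <= total_cost c :=
  le_trans (OPT_pad c_ge0 m_gt0) (OPT_le_total c).
have S_ge0 := total_cost_ge0 c_ge0.
have := ler_wpM2l beta_ge0 OPT_le; rewrite /extra_cost; lra.
Qed.

Lemma extra_job_not_on_lift c Y i : general c ->
  makespan (pad c) Y < extra_cost c -> ord_max \notin Y (lift ord_max i).
Proof.
move=> c_ge0 Y_lt; apply/negP => maxY.
have := entry_le_makespan (pad_general c_ge0) maxY.
by rewrite leNgt (lt_le_trans Y_lt (extra_cost_le_pad_lift_max i c_ge0)).
Qed.

Lemma lift_not_on_extra_machine c Y j : general c ->
  makespan (pad c) Y < extra_cost c -> lift ord_max j \notin Y ord_max.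
Proof.
move=> c_ge0 Y_lt; apply/negP => jY.
have := entry_le_makespan (pad_general c_ge0) jY.
by rewrite pad_max_lift leNgt Y_lt.
Qed.

Definition restrict Y : allocation m n :=
  [ffun i => [set j | lift ord_max j \in Y (lift ord_max i)]].

Lemma restrict_allocation Y : is_allocation Y ->
  (forall j, lift ord_max j \notin Y ord_max) -> is_allocation (restrict Y).
Proof.
move=> /is_allocationP[disjY coverY] extra_idle; apply/is_allocationP; split.
- move=> i k j ik; rewrite !ffunE !inE; apply: disjY.
  by rewrite (inj_eq lift_inj).
- move=> j; have [k jYk] := coverY (lift ord_max j).
  case: (unliftP ord_max k) jYk => [k'|] -> jYk.
  + by exists k'; rewrite ffunE inE.
  + by move: (extra_idle j); rewrite jYk.
Qed.

Lemma cost_restrict c Y i k : ord_max \notin Y (lift ord_max k) ->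
  cost c i (restrict Y k) = cost (pad c) (lift ord_max i) (Y (lift ord_max k)).
Proof. by move=> maxNY; rewrite ffunE cost_pad. Qed.

Lemma makespan_restrict c Y : (forall i, ord_max \notin Y (lift ord_max i)) ->
  makespan c (restrict Y) <= makespan (pad c) Y.
Proof.
move=> extra_off; apply: makespan_le; first exact: makespan_ge0.
by move=> i; rewrite cost_restrict //; exact: cost_le_makespan.
Qed.

Lemma restrict_approx c Y : general c -> (0 < m)%N -> is_allocation Y ->
  makespan (pad c) Y <= beta * OPT (pad c) ->
  [/\ is_allocation (restrict Y), makespan c (restrict Y) <= beta * OPT c
    & forall i, ord_max \notin Y (lift ord_max i)].
Proof.
move=> c_ge0 m_gt0 Y_alloc Y_approx.
have Y_lt := approx_makespan_lt_extra_cost c_ge0 m_gt0 Y_approx.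
have extra_off i := extra_job_not_on_lift i c_ge0 Y_lt.
split=> //.
- by apply: restrict_allocation => // j; exact: lift_not_on_extra_machine.
- apply: le_trans (makespan_restrict c extra_off) (le_trans Y_approx _).
  by apply: ler_wpM2l (OPT_pad c_ge0 m_gt0); exact: le_trans ler01 beta_ge1.
Qed.

End Padding.

Theorem mainTheorem10 (R : realType) (alpha beta : R) (m n : nat) :
  0 < alpha -> alpha <= 1 -> 1 <= beta -> (2 <= m)%N -> (2 <= n)%N ->
  (exists (A : alloc_fun R m.+1 n.+1) (p : pay_fun R m.+1 n.+1),
      is_mechanism (@normalized R m.+1 n.+1) A /\
      envy_free alpha (@normalized R m.+1 n.+1) A p /\
      beta_approx beta (@normalized R m.+1 n.+1) A) ->
  exists (A : alloc_fun R m n) (p : pay_fun R m n),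
      is_mechanism (@general R m n) A /\
      envy_free alpha (@general R m n) A p /\
      beta_approx beta (@general R m n) A.
Proof.
move=> _ _ beta_ge1 m_ge2 n_ge2 [A [p [A_mech [A_ef A_approx]]]].
have m_gt0 : (0 < m)%N by apply: leq_trans m_ge2.
have pad_norm (c : instance R m n) := @pad_normalized R m n beta beta_ge1 n_ge2 c.
have restrict_pad (c : instance R m n) (c_ge0 : general c) :=
  restrict_approx beta_ge1 n_ge2 c_ge0 m_gt0
    (A_mech _ (pad_norm c c_ge0)) (A_approx _ (pad_norm c c_ge0)).
exists (fun c => restrict (A (pad beta c))).
exists (fun c i => p (pad beta c) (lift ord_max i)).
split; [|split] => c c_ge0;
  have [Y_alloc Y_approx extra_off] := restrict_pad c c_ge0.
- exact: Y_alloc.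
- move=> i k; rewrite !(cost_restrict beta) //.
  exact: A_ef (pad_norm c c_ge0) _ _.
- exact: Y_approx.
Qed.
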